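(* Every execution path of a cellular multipointed $d$-space $X_\lambda$ is locally injective.
   Context: Work in $\mathbf{Top}$, the category of $\Delta$-generated spaces (or $\Delta$-Hausdorff $\Delta$-generated spaces). $\mathcal{G}(1,1)$: nondecreasing homeomorphisms of $[0,1]$; $*_N$: normalized composition of paths on $[0,1]$ (first on $[0,1/2]$, second on $[1/2,1]$, double speed). A multipointed $d$-space $X=(|X|,X^0,\mathbb{P}^{\mathcal{G}}X)$: a space, a subset of states, a set of continuous execution paths $[0,1]\to|X|$ with endpoints in $X^0$, stable under precomposition by $\mathcal{G}(1,1)$ and $*_N$. Colimits: underlying spaces and states by colimits, execution paths generated by images under $*_N$ and reparametrization. ${\rm Glob}^{\mathcal{G}}(Z)$: quotient of $\{0,1\}\sqcup Z\times[0,1]$ with $(z,0)\sim0$, $(z,1)\sim1$, states $\{0,1\}$, paths $t\mapsto(z,\phi(t))$, $\phi\in\mathcal{G}(1,1)$. Cellular: $X_\lambda=\varinjlim_{\nu<\lambda}X_\nu$ for an ordinal $\lambda$ and colimit-preserving $\nu\mapsto X_\nu$ with $X_0=(X^0,X^0,\varnothing)$ a set and each $X_\nu\to X_{\nu+1}$ a pushout of some ${\rm Glob}^{\mathcal{G}}(\mathbf{S}^{n_\nu-1})\subset{\rm Glob}^{\mathcal{G}}(\mathbf{D}^{n_\nu})$. *)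

From HB Require Import structures.
From mathcomp Require Import all_boot all_order all_algebra.
From mathcomp Require Import all_classical all_reals topology normedtype subtype_topology.
Import numFieldNormedType.Exports.
Import Order.TTheory GRing.Theory Num.Theory.

Set Implicit Arguments.
Unset Strict Implicit.
Unset Printing Implicit Defensive.

Local Open Scope classical_set_scope.
Local Open Scope ring_scope.

Section MultipointedDSpaces.
Variable R : realType.

Definition I01set : set R := `[0, 1].
Definition I01 : topologicalType := I01set.

(** Projection of R onto [0,1] (only used on arguments already in [0,1]). *)
Definition clamp (x : R) : R := Num.min 1 (Num.max 0 x).

Lemma clamp_in (x : R) : clamp x \in I01set.
Proof.
apply/mem_set; rewrite /I01set /= in_itv /= /clamp.
apply/andP; split.
- by rewrite le_min ler01 le_max lexx.
- by rewrite ge_min lexx.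
Qed.

Definition toI (x : R) : I01 := exist _ (clamp x) (clamp_in x).

Definition i0 : I01 := toI 0.
Definition i1 : I01 := toI 1.

(** Delta-generated spaces: the topology is final w.r.t. all continuous
    maps from [0,1] (equivalently, from all topological simplices). *)
Definition DeltaGenerated (T : topologicalType) : Prop :=
  forall U : set T,
    (forall g : I01 -> T, continuous g -> open (g @^-1` U)) -> open U.

Definition G11 (phi : I01 -> I01) : Prop :=
  [/\ continuous phi,
      (exists psi : I01 -> I01,
         [/\ continuous psi, cancel phi psi & cancel psi phi]) &
      (forall x y : I01, set_val x <= set_val y ->
                         set_val (phi x) <= set_val (phi y))].

Definition concatN (T : Type) (g h : I01 -> T) : I01 -> T :=
  fun t => if set_val t <= 1 / 2 then g (toI (2 * set_val t))
           else h (toI (2 * set_val t - 1)).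

Record mds := MDS {
  mcar :> topologicalType;
  mcar_DG : DeltaGenerated mcar;
  mst : set mcar;
  mP : set (I01 -> mcar);
  mP_cont : forall g, mP g -> continuous g;
  mP_ends : forall g, mP g -> mst (g i0) /\ mst (g i1);
  mP_reparam : forall g phi, mP g -> G11 phi -> mP (g \o phi);
  mP_concat : forall g h, mP g -> mP h -> g i1 = h i0 -> mP (concatN g h)
}.

Arguments mst : clear implicits.
Arguments mP : clear implicits.

Definition is_hom (X Y : mds) (f : X -> Y) : Prop :=
  [/\ continuous f,
      (forall x, mst X x -> mst Y (f x)) &
      (forall g, mP X g -> mP Y (f \o g))].

Definition Disk (n : nat) : set 'rV[R]_n :=
  [set x | \sum_(i < n) x ord0 i ^+ 2 <= 1].
Definition Sphere (n : nat) : set 'rV[R]_n :=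
  [set x | \sum_(i < n) x ord0 i ^+ 2 = 1].
Arguments Disk : clear implicits.
Arguments Sphere : clear implicits.

(** A morphism Glob(Z) -> Y, for Z a subset of R^n, written out:
    Glob(Z) is the quotient of {0,1} + Z x [0,1] identifying (z,0) ~ 0 and
    (z,1) ~ 1; a morphism is given by the images a, b of the states 0, 1 and
    the map g on Z x [0,1] (only its values on Z x [0,1] matter), which must
    be continuous, compatible with the identifications, and send the
    execution paths t |-> (z, phi t) to execution paths. *)
Definition glob_map (n : nat) (Z : set 'rV[R]_n) (Y : mds) (a b : Y)
    (g : 'rV[R]_n * R -> Y) : Prop :=
  [/\ mst Y a, mst Y b,
      {within [set p | Z p.1 /\ I01set p.2], continuous g},
      (forall z, Z z -> g (z, 0) = a /\ g (z, 1) = b) &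
      (forall z phi, Z z -> G11 phi ->
         mP Y (fun t => g (z, set_val (phi t))))].

(** f : X -> X' is a pushout of Glob(S^{n-1}) ⊂ Glob(D^n) along some
    attaching morphism Glob(S^{n-1}) -> X, in the category of multipointed
    d-spaces (universal property). *)
Definition cell_pushout (X X' : mds) (f : X -> X') : Prop :=
  exists (n : nat) (a b : X) (g : 'rV[R]_n * R -> X)
         (a' b' : X') (g' : 'rV[R]_n * R -> X'),
  [/\ glob_map (Sphere n) a b g,
      glob_map (Disk n) a' b' g',
      a' = f a /\ b' = f b,
      (forall z t, Sphere n z -> I01set t -> g' (z, t) = f (g (z, t))) &
      forall (Y : mds) (h : X -> Y) (c d : Y) (k : 'rV[R]_n * R -> Y),
        is_hom h -> glob_map (Disk n) c d k -> c = h a -> d = h b ->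
        (forall z t, Sphere n z -> I01set t -> k (z, t) = h (g (z, t))) ->
        let P (u : X' -> Y) :=
          [/\ is_hom u, (forall x, u (f x) = h x), u a' = c, u b' = d &
              (forall z t, Disk n z -> I01set t -> u (g' (z, t)) = k (z, t))]
        in exists u, P u /\ forall v, P v -> v = u].

(** Ordinal indexing: O is a well-ordered type (the ordinals <= lambda),
    with greatest element lam. *)
Section Ordinals.
Variables (O : Type) (lt : O -> O -> Prop).
Definition ole (m n : O) : Prop := m = n \/ lt m n.
Definition well_order : Prop :=
  [/\ well_founded lt,
      (forall m n r, lt m n -> lt n r -> lt m r) &
      (forall m n, [\/ lt m n, m = n | lt n m])].
Definition is_zero (n : O) : Prop := forall m, ~ lt m n.
Definition is_succ (m n : O) : Prop :=
  lt m n /\ forall r, ~ (lt m r /\ lt r n).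
Definition is_limit (n : O) : Prop :=
  ~ is_zero n /\ ~ (exists m, is_succ m n).
End Ordinals.

(** Cellular multipointed d-space: a colimit-preserving functor
    nu |-> X_nu (nu <= lam), with X_0 a discrete set (all points states, no
    execution paths), each X_nu -> X_{nu+1} a cell pushout, and X_nu the
    colimit of the X_mu, mu < nu, at limit ordinals. *)
Definition cellular (O : Type) (lt : O -> O -> Prop) (lam : O)
    (X : O -> mds) (F : forall m n, X m -> X n) : Prop :=
  [/\ well_order lt /\ (forall n, ole lt n lam),
      [/\ (forall n (x : X n), F n n x = x),
          (forall m n r, ole lt m n -> ole lt n r ->
             forall x, F n r (F m n x) = F m r x) &
          (forall m n, ole lt m n -> is_hom (F m n))],
      (forall n, is_zero lt n ->
         [/\ forall U : set (X n), open U, mst (X n) = setT & mP (X n) = set0]),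
      (forall m n, is_succ lt m n -> cell_pushout (F m n)) &
      (forall n, is_limit lt n ->
         forall (Y : mds) (h : forall m, X m -> Y),
           (forall m, lt m n -> is_hom (h m)) ->
           (forall m r, ole lt m r -> lt r n ->
              forall x, h r (F m r x) = h m x) ->
           let P (u : X n -> Y) :=
             is_hom u /\ (forall m, lt m n -> forall x, u (F m n x) = h m x)
           in exists u, P u /\ forall v, P v -> v = u)].

Definition locally_injective (T : Type) (g : I01 -> T) : Prop :=
  forall t : I01, exists2 U : set I01, nbhs t U &
    forall x y, U x -> U y -> g x = g y -> x = y.

End MultipointedDSpaces.

Arguments cellular {R O} lt lam X F.
Arguments mP {R} m _.
Arguments mst {R} m _.

(* Call a path tame, relative to a set B of base points and two disjoint sets
   L ("late") and E ("early"), if it is locally injective, starts and ends in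
   B, and enters every point of B it visits through L and leaves it through E.
   Tame paths are stable under reparametrization and, L and E being disjoint,
   under normalized composition: near the junction the first path runs in L
   and the second one in E, so the composite cannot fold back.
   In a cellular space take for B the image of the starting set of states and
   for L and E the points of the open cells whose time coordinate is above,
   resp. below, 1/2. A path crossing one cell is tame, so by transfinite
   induction the universal properties of the cell pushouts and of the
   colimits factor the identity of every stage through its tame part. The
   facts about underlying sets used on the way (the transition maps are
   injective, each cell has a well defined time coordinate, distinct cells do
   not meet) come from the same universal properties, applied to indiscrete
   multipointed d-spaces. *)

From HB Require Import structures.
From mathcomp Require Import all_boot all_order all_algebra.
From mathcomp Require Import all_classical all_reals topology normedtype subtype_topology.
From mathcomp Require Import lra.
Import numFieldNormedType.Exports.
Import Order.TTheory GRing.Theory Num.Theory.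

Set Implicit Arguments.
Unset Strict Implicit.
Unset Printing Implicit Defensive.

Local Open Scope classical_set_scope.
Local Open Scope ring_scope.

Local Notation v := (@set_val (Real.sort _) (@I01set _)).

Section UnitInterval.
Variable R : realType.
Implicit Types (s t x y : I01 R) (phi : I01 R -> I01 R).

Lemma val01_bounds t : 0 <= v t <= 1.
Proof. by have := set_valP t; rewrite /I01set /= in_itv. Qed.

Lemma val01_inj s t : v s = v t -> s = t. Proof. exact: val_inj. Qed.

Lemma toIK (r : R) : 0 <= r <= 1 -> v (toI r) = r.
Proof. by move=> /andP[r0 r1]; change (clamp r = r); rewrite /clamp max_r // min_r. Qed.

Lemma val_i0 : v (i0 R) = 0. Proof. by rewrite toIK // lexx ler01. Qed.
Lemma val_i1 : v (i1 R) = 1. Proof. by rewrite toIK // lexx ler01. Qed.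

Lemma ex_pos_le2 (a b : R) : 0 < a -> 0 < b -> exists2 d, 0 < d & d <= a /\ d <= b.
Proof.
by move=> a0 b0; exists (Num.min a b); rewrite ?lt_min ?a0 ?b0 // !ge_min !lexx orbT.
Qed.

Definition injective_near (T : Type) (p : I01 R -> T) t : Prop :=
  exists2 e : R, 0 < e & forall x y,
    `|v x - v t| < e -> `|v y - v t| < e -> p x = p y -> x = y.

Lemma locally_injectiveP (T : Type) (p : I01 R -> T) :
  locally_injective p <-> forall t, injective_near p t.
Proof.
split=> [pinj t | pnear t].
- have [U /nbhs_ballP[e e0 sU] injU] := pinj t.
  exists e => // x y tx ty; apply: injU; apply: sU;
  [change (`|v t - v x| < e) | change (`|v t - v y| < e)]; by rewrite distrC.
- have [e e0 inje] := pnear t; exists (ball t e); first exact: nbhsx_ballx.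
  by move=> x y tx ty; apply: inje; rewrite distrC.
Qed.

Lemma continuous01_near phi t : continuous phi ->
  forall e, 0 < e -> exists2 d, 0 < d & forall s,
    `|v s - v t| < d -> `|v (phi s) - v (phi t)| < e.
Proof.
move=> phic e e0.
have /nbhs_ballP[d d0 sd] : nbhs t (phi @^-1` ball (phi t) e).
  by apply: phic; exact: nbhsx_ballx.
exists d => // s ts; rewrite distrC; apply: sd.
by change (`|v t - v s| < d); rewrite distrC.
Qed.

End UnitInterval.

Section Reparametrization.
Variables (R : realType) (phi : I01 R -> I01 R).
Implicit Types (t x y : I01 R).
Hypothesis phiG : G11 phi.

Lemma G11_continuous : continuous phi. Proof. by case: phiG. Qed.

Lemma G11_inj : injective phi.
Proof. by case: phiG => _ [psi [_ phiK _]] _; exact: can_inj phiK. Qed.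

Lemma G11_le x y : v x <= v y -> v (phi x) <= v (phi y).
Proof. by case: phiG => _ _; apply. Qed.

Lemma G11_lt x y : v x < v y -> v (phi x) < v (phi y).
Proof.
move=> xy; rewrite lt_neqAle G11_le ?ltW // andbT.
by apply: contraTneq xy => /val01_inj/G11_inj ->; rewrite ltxx.
Qed.

Lemma G11_i0 : phi (i0 R) = i0 R.
Proof.
case: phiG => _ [psi [_ _ psiK]] _; apply: val01_inj; rewrite val_i0.
apply/le_anti; rewrite (andP (val01_bounds _)).1 andbT -val_i0.
rewrite -{2}(psiK (i0 R)); apply: G11_le.
by rewrite val_i0 (andP (val01_bounds _)).1.
Qed.

Lemma G11_i1 : phi (i1 R) = i1 R.
Proof.
case: phiG => _ [psi [_ _ psiK]] _; apply: val01_inj; rewrite val_i1.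
apply/le_anti; rewrite (andP (val01_bounds _)).2 /= -val_i1.
rewrite -{1}(psiK (i1 R)); apply: G11_le.
by rewrite val_i1 (andP (val01_bounds _)).2.
Qed.

Lemma G11_gt0 t : 0 < v t -> 0 < v (phi t).
Proof. by rewrite -val_i0 -{2}G11_i0; exact: G11_lt. Qed.

Lemma G11_lt1 t : v t < 1 -> v (phi t) < 1.
Proof. by rewrite -val_i1 -{2}G11_i1; exact: G11_lt. Qed.

End Reparametrization.

Section Concatenation.
Variables (R : realType) (T : Type) (p q : I01 R -> T).
Implicit Types (t x : I01 R).

Lemma val_double x : v x <= 1/2 -> v (toI (2 * v x)) = 2 * v x.
Proof. by have /andP[] := val01_bounds x => *; rewrite toIK //; apply/andP; split; lra. Qed.

Lemma val_double_sub1 x : 1/2 < v x -> v (toI (2 * v x - 1)) = 2 * v x - 1.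
Proof. by have /andP[] := val01_bounds x => *; rewrite toIK //; apply/andP; split; lra. Qed.

Lemma concatN_le x : v x <= 1/2 -> concatN p q x = p (toI (2 * v x)).
Proof. by rewrite /concatN => ->. Qed.

Lemma concatN_gt x : 1/2 < v x -> concatN p q x = q (toI (2 * v x - 1)).
Proof. by rewrite /concatN leNgt => ->. Qed.

Lemma concatN_i0 : concatN p q (i0 R) = p (i0 R).
Proof.
have h : v (i0 R) <= 1/2 by rewrite val_i0; lra.
by rewrite concatN_le //; congr p; apply: val01_inj; rewrite val_double // val_i0 mulr0.
Qed.

Lemma concatN_i1 : concatN p q (i1 R) = q (i1 R).
Proof.
have h : 1/2 < v (i1 R) by rewrite val_i1; lra.
by rewrite concatN_gt //; congr q; apply: val01_inj; rewrite val_double_sub1 // val_i1; lra.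
Qed.

Lemma concatN_half t : v t = 1/2 -> concatN p q t = p (i1 R).
Proof.
move=> th; have th' : v t <= 1/2 by rewrite th.
by rewrite concatN_le //; congr p; apply: val01_inj; rewrite val_double // th val_i1; lra.
Qed.

End Concatenation.

Section LocalInjectivity.
Variables (R : realType) (T : Type).
Implicit Types (p q : I01 R -> T) (t x y : I01 R).

Lemma locally_injective_G11 p phi :
  G11 phi -> locally_injective p -> locally_injective (p \o phi).
Proof.
move=> phiG /locally_injectiveP pinj; apply/locally_injectiveP => t.
have [e e0 inj] := pinj (phi t).
have [d d0 near] := continuous01_near t (G11_continuous phiG) e0.
by exists d => // x y tx ty /inj pxy; apply: (G11_inj phiG); apply: pxy; apply: near.
Qed.

Lemma injective_near_concatN_lt p q t : v t < 1/2 ->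
  injective_near p (toI (2 * v t)) -> injective_near (concatN p q) t.
Proof.
move=> th [e e0 inj].
have [d d0 [de dt]] : exists2 d : R, 0 < d & d <= e/2 /\ d <= 1/2 - v t.
  by apply: ex_pos_le2; lra.
exists d => // x y; rewrite !ltr_distl => /andP[? ?] /andP[? ?].
have [xh yh th'] : [/\ v x <= 1/2, v y <= 1/2 & v t <= 1/2] by split; lra.
rewrite !concatN_le // => pxy; apply: val01_inj.
have /(congr1 v) : toI (2 * v x) = toI (2 * v y).
  by apply: inj; rewrite // ltr_distl !val_double //; apply/andP; split; lra.
by rewrite !val_double //; lra.
Qed.

Lemma injective_near_concatN_gt p q t : 1/2 < v t ->
  injective_near q (toI (2 * v t - 1)) -> injective_near (concatN p q) t.
Proof.
move=> th [e e0 inj].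
have [d d0 [de dt]] : exists2 d : R, 0 < d & d <= e/2 /\ d <= v t - 1/2.
  by apply: ex_pos_le2; lra.
exists d => // x y; rewrite !ltr_distl => /andP[? ?] /andP[? ?].
have [xh yh] : 1/2 < v x /\ 1/2 < v y by split; lra.
rewrite !concatN_gt // => pxy; apply: val01_inj.
have /(congr1 v) : toI (2 * v x - 1) = toI (2 * v y - 1).
  by apply: inj; rewrite // ltr_distl !val_double_sub1 //; apply/andP; split; lra.
by rewrite !val_double_sub1 //; lra.
Qed.

Lemma injective_near_concatN_half p q t : v t = 1/2 -> p (i1 R) = q (i0 R) ->
  injective_near p (i1 R) -> injective_near q (i0 R) ->
  (exists2 d, 0 < d & forall x y,
     1 - d < v x -> v x < 1 -> 0 < v y -> v y < d -> p x <> q y) ->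
  injective_near (concatN p q) t.
Proof.
move=> th pq [e1 e10 inj1] [e2 e20 inj2] [d d0 nofold].
have [c1 c10 [c1e1 c1e2]] : exists2 c : R, 0 < c & c <= e1/2 /\ c <= e2/2.
  by apply: ex_pos_le2; lra.
have [c c0 [cc1 cd]] : exists2 c : R, 0 < c & c <= c1 /\ c <= d/2.
  by apply: ex_pos_le2; lra.
have mixed x y : `|v x - v t| < c -> `|v y - v t| < c -> v x <= 1/2 -> 1/2 < v y ->
    concatN p q x <> concatN p q y.
  rewrite th !ltr_distl => /andP[? ?] /andP[? ?] xh yh.
  have y' := val_double_sub1 yh; rewrite concatN_le // concatN_gt //.
  have [x1|x1] := eqVneq (v x) (1/2).
  - have -> : toI (2 * v x) = i1 R by apply: val01_inj; rewrite val_double // x1 val_i1; lra.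
    rewrite pq => q0y; have /(congr1 v) : i0 R = toI (2 * v y - 1).
      by apply: inj2; rewrite // ?y' val_i0 ?subrr ?normr0 // ltr_distl; apply/andP; split; lra.
    by rewrite val_i0 y'; lra.
  - have x' := val_double xh; apply: nofold; rewrite ?x' ?y'; lra.
exists c => // x y tx ty.
case: (lerP (v x) (1/2)) => xh; case: (lerP (v y) (1/2)) => yh.
- move: tx ty; rewrite th !ltr_distl => /andP[? ?] /andP[? ?].
  rewrite !concatN_le // => pxy; apply: val01_inj.
  have /(congr1 v) : toI (2 * v x) = toI (2 * v y).
    by apply: inj1; rewrite // !val_double // val_i1 ltr_distl; apply/andP; split; lra.
  by rewrite !val_double //; lra.
- by move/(mixed x y tx ty xh yh).
- by move/esym/(mixed y x ty tx yh xh).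
- move: tx ty; rewrite th !ltr_distl => /andP[? ?] /andP[? ?].
  rewrite !concatN_gt // => pxy; apply: val01_inj.
  have /(congr1 v) : toI (2 * v x - 1) = toI (2 * v y - 1).
    by apply: inj2; rewrite // !val_double_sub1 // val_i0 ltr_distl; apply/andP; split; lra.
  by rewrite !val_double_sub1 //; lra.
Qed.

Lemma concatN_locally_injective p q : p (i1 R) = q (i0 R) ->
  locally_injective p -> locally_injective q ->
  (exists2 d, 0 < d & forall x y,
     1 - d < v x -> v x < 1 -> 0 < v y -> v y < d -> p x <> q y) ->
  locally_injective (concatN p q).
Proof.
move=> pq /locally_injectiveP pinj /locally_injectiveP qinj nofold.
apply/locally_injectiveP => t; case: (ltgtP (v t) (1/2)) => th.
- exact/injective_near_concatN_lt.
- exact/injective_near_concatN_gt.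
- exact/injective_near_concatN_half.
Qed.

End LocalInjectivity.

Section TamePaths.
Variables (R : realType) (T : Type) (B L E : set T).
Implicit Types (p q : I01 R -> T) (s t x y : I01 R).

Definition arrives_through p := forall t, 0 < v t -> B (p t) ->
  exists2 d, 0 < d & forall s, v t - d < v s -> v s < v t -> L (p s).

Definition leaves_through p := forall t, v t < 1 -> B (p t) ->
  exists2 d, 0 < d & forall s, v t < v s -> v s < v t + d -> E (p s).

Definition tame_path p := [/\ B (p (i0 R)) /\ B (p (i1 R)),
  locally_injective p, arrives_through p & leaves_through p].

Lemma arrives_through_G11 p phi :
  G11 phi -> arrives_through p -> arrives_through (p \o phi).
Proof.
move=> phiG pL t t0 /= Bpt.
have [e e0 sL] := pL _ (G11_gt0 phiG t0) Bpt.
have [d d0 near] := continuous01_near t (G11_continuous phiG) e0.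
exists d => // s ts st; apply: sL; last exact: G11_lt.
have : `|v (phi s) - v (phi t)| < e by apply: near; rewrite ltr_distl; apply/andP; split; lra.
by rewrite ltr_distl => /andP[? ?]; lra.
Qed.

Lemma leaves_through_G11 p phi :
  G11 phi -> leaves_through p -> leaves_through (p \o phi).
Proof.
move=> phiG pE t t1 /= Bpt.
have [e e0 sE] := pE _ (G11_lt1 phiG t1) Bpt.
have [d d0 near] := continuous01_near t (G11_continuous phiG) e0.
exists d => // s ts st; apply: sE; first exact: G11_lt.
have : `|v (phi s) - v (phi t)| < e by apply: near; rewrite ltr_distl; apply/andP; split; lra.
by rewrite ltr_distl => /andP[? ?]; lra.
Qed.

Lemma tame_path_G11 p phi : G11 phi -> tame_path p -> tame_path (p \o phi).
Proof.
move=> phiG [[B0 B1] pinj pL pE]; split.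
- by rewrite /= G11_i0 // G11_i1.
- exact: locally_injective_G11.
- exact: arrives_through_G11.
- exact: leaves_through_G11.
Qed.

Lemma arrives_through_concatN p q :
  arrives_through p -> arrives_through q -> arrives_through (concatN p q).
Proof.
move=> pL qL t t0; have /andP[_ t1] := val01_bounds t.
case: (lerP (v t) (1/2)) => th.
- have t' := val_double th; rewrite concatN_le // => /pL[|e e0 sL]; first by rewrite t'; lra.
  exists (e / 2) => [|s ts st]; first lra.
  have sh : v s <= 1/2 by lra.
  by rewrite concatN_le //; apply: sL; rewrite t' val_double //; lra.
- have t' := val_double_sub1 th; rewrite concatN_gt // => /qL[|e e0 sL]; first by rewrite t'; lra.
  have [d d0 [de dt]] : exists2 d : R, 0 < d & d <= e/2 /\ d <= v t - 1/2.
    by apply: ex_pos_le2; lra.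
  exists d => // s ts st; have sh : 1/2 < v s by lra.
  by rewrite concatN_gt //; apply: sL; rewrite t' val_double_sub1 //; lra.
Qed.

Lemma leaves_through_concatN p q : p (i1 R) = q (i0 R) ->
  leaves_through p -> leaves_through q -> leaves_through (concatN p q).
Proof.
move=> pq pE qE t t1; have /andP[t0 _] := val01_bounds t.
case: (ltgtP (v t) (1/2)) => th.
- have t' := val_double (ltW th).
  rewrite concatN_le ?ltW // => /pE[|e e0 sE]; first by rewrite t'; lra.
  have [d d0 [de dt]] : exists2 d : R, 0 < d & d <= e/2 /\ d <= 1/2 - v t.
    by apply: ex_pos_le2; lra.
  exists d => // s ts st; have sh : v s <= 1/2 by lra.
  by rewrite concatN_le //; apply: sE; rewrite t' val_double //; lra.
- have t' := val_double_sub1 th; rewrite concatN_gt // => /qE[|e e0 sE]; first by rewrite t'; lra.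
  exists (e / 2) => [|s ts st]; first lra.
  have sh : 1/2 < v s by lra.
  by rewrite concatN_gt //; apply: sE; rewrite t' val_double_sub1 //; lra.
- rewrite concatN_half // pq =>  /qE[|e e0 sE]; first by rewrite val_i0; lra.
  exists (e / 2) => [|s ts st]; first lra.
  have sh : 1/2 < v s by lra.
  by rewrite concatN_gt //; apply: sE; rewrite val_double_sub1 // val_i0; lra.
Qed.

Lemma tame_path_concatN p q : (forall y : T, L y -> E y -> False) ->
  p (i1 R) = q (i0 R) -> tame_path p -> tame_path q -> tame_path (concatN p q).
Proof.
move=> LE pq [[pB0 pB1] pinj pL pE] [[qB0 qB1] qinj qL qE]; split.
- by rewrite concatN_i0 concatN_i1.
- apply: concatN_locally_injective => //.
  have [d1 d10 sL] := pL (i1 R) ltac:(rewrite val_i1; lra) pB1.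
  have [d2 d20 sE] := qE (i0 R) ltac:(rewrite val_i0; lra) qB0.
  have [d d0 [dd1 dd2]] := ex_pos_le2 d10 d20.
  exists d => // x y x1 x2 y1 y2 pxy; apply: (LE (p x)); last rewrite pxy.
    by apply: sL; rewrite ?val_i1; lra.
  by apply: sE; rewrite ?val_i0; lra.
- exact: arrives_through_concatN.
- exact: leaves_through_concatN.
Qed.

Lemma tame_path_traversal p :
  B (p (i0 R)) -> B (p (i1 R)) ->
  (forall t, 0 < v t < 1 -> ~ B (p t)) ->
  (forall x y, 0 < v x < 1 -> 0 < v y < 1 -> p x = p y -> x = y) ->
  (forall t, 0 < v t < 1/2 -> E (p t)) ->
  (forall t, 1/2 < v t < 1 -> L (p t)) -> tame_path p.
Proof.
move=> B0 B1 nB pinj pE pL.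
have ends t : ~~ (0 < v t < 1) -> B (p t) /\ (v t = 0 \/ v t = 1).
  have /andP[t0 t1] := val01_bounds t; rewrite negb_and -!leNgt => tend.
  have [->|->] : t = i0 R \/ t = i1 R.
    by case/orP: tend => ?; [left|right]; apply: val01_inj; rewrite ?val_i0 ?val_i1; lra.
  - by rewrite val_i0; split => //; left.
  - by rewrite val_i1; split => //; right.
have Bends t : B (p t) -> v t = 0 \/ v t = 1.
  move=> Bt; have tI : ~~ (0 < v t < 1) by apply/negP => /nB.
  by have [] := ends t tI.
split => //.
- apply/locally_injectiveP => t; exists (1/2) => [|x y]; first lra.
  rewrite !ltr_distl => /andP[? ?] /andP[? ?] pxy.
  have [xI|/ends[Bx x01]] := boolP (0 < v x < 1);
    have [yI|/ends[By y01]] := boolP (0 < v y < 1).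
  + exact: pinj.
  + by case: (nB x xI); rewrite pxy.
  + by case: (nB y yI); rewrite -pxy.
  + by apply: val01_inj; case: x01 y01 => ? [] ?; lra.
- move=> t t0 Bt; have [|t1] := Bends t Bt; first lra.
  exists (1/2) => [|s ? ?]; first lra.
  by apply: pL; apply/andP; split; lra.
- move=> t t1 Bt; have [t0|] := Bends t Bt; last lra.
  exists (1/2) => [|s ? ?]; first lra.
  by apply: pE; apply/andP; split; lra.
Qed.

End TamePaths.

Lemma tame_path_map (R : realType) (T1 T2 : Type) (B1 L1 E1 : set T1)
    (B2 L2 E2 : set T2) (f : T1 -> T2) (p : I01 R -> T1) :
  injective f -> (forall y, B1 y <-> B2 (f y)) ->
  (forall y, L1 y -> L2 (f y)) -> (forall y, E1 y -> E2 (f y)) ->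
  tame_path B1 L1 E1 p -> tame_path B2 L2 E2 (f \o p).
Proof.
move=> finj fB fL fE [[B0 B1'] pinj pL pE]; split.
- by split; apply/fB.
- by move=> t; have [U Ut injU] := pinj t; exists U => // x y Ux Uy /finj; exact: injU.
- move=> t t0 /fB /(pL _ t0) [d d0 sL]; exists d => // s ? ?; apply: fL; exact: sL.
- move=> t t1 /fB /(pE _ t1) [d d0 sE]; exists d => // s ? ?; apply: fE; exact: sE.
Qed.

Lemma is_hom_id (R : realType) (Z : mds R) : is_hom (fun x : Z => x).
Proof. by split => // x; exact: cvg_id. Qed.

Section TameSubspace.
Variables (R : realType) (Y : mds R) (B L E : set Y).
Hypothesis LE : forall y, L y -> E y -> False.

Definition tame_mds : mds R.
refine (@MDS R Y (@mcar_DG R Y) (mst Y `&` B) (mP Y `&` tame_path B L E) _ _ _ _).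
- by move=> p [pP _]; exact: mP_cont pP.
- move=> p [pP [[B0 B1] _ _ _]]; have [S0 S1] := mP_ends pP; by split; split.
- by move=> p phi [pP ptame] phiG; split; [exact: mP_reparam | exact: tame_path_G11].
- by move=> p q [pP ptame] [qP qtame] pq; split; [exact: mP_concat | exact: tame_path_concatN].
Defined.

Lemma is_hom_tameP (Z : mds R) (u : Z -> Y) :
  is_hom (u : Z -> tame_mds) <->
  [/\ is_hom u, forall x, mst Z x -> B (u x) &
      forall p, mP Z p -> tame_path B L E (u \o p)].
Proof.
split=> [[uc ust uP]|[[uc ust uP] uB utame]].
- split=> [|x /ust[] //|p /uP[] //].
  by split=> // [x /ust[]|p /uP[]].
- by split=> // [x zx|p zp]; split; auto.
Qed.

End TameSubspace.

Section Indiscrete.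
Variables (R : realType) (T : choiceType).

(* The initial topology of a constant map is the indiscrete topology. *)
Definition indiscrete : topologicalType := initial_topology (fun _ : T => true).

Lemma continuous_indiscrete (S : topologicalType) (f : S -> indiscrete) :
  continuous f.
Proof. by apply: continuous_comp_initial => x; exact: cst_continuous. Qed.

Lemma indiscrete_DG : DeltaGenerated R indiscrete.
Proof.
move=> U Uopen.
have [->|/set0P[y Uy]] := eqVneq U set0; first exact: open0.
have [->|/setTPn[y' nUy']] := eqVneq U setT; first exact: openT.
pose jump (t : I01 R) : indiscrete := if v t <= 1/2 then y else y'.
have half : v (toI (1/2 : R)) = 1/2 by rewrite toIK //; apply/andP; split; lra.
have /Uopen := continuous_indiscrete (f := jump); rewrite openE.
have /[swap]/[apply] : (jump @^-1` U) (toI (1/2)) by rewrite /= /jump half lexx.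
move=> /nbhs_ballP[e /= e0 sU].
have [d d0 [de d4]] : exists2 d : R, 0 < d & d <= e/2 /\ d <= 1/4 by apply: ex_pos_le2; lra.
have dv : v (toI (1/2 + d)) = 1/2 + d by rewrite toIK //; apply/andP; split; lra.
have /sU : ball (toI (1/2)) e (toI (1/2 + d)).
  by change (`|v (toI (1/2)) - v (toI (1/2 + d))| < e); rewrite half dv ltr_distl; apply/andP; split; lra.
by rewrite /= /jump dv; case: ifPn => //; lra.
Qed.

Definition indiscrete_mds : mds R :=
  @MDS R indiscrete indiscrete_DG setT setT
    (fun p _ => continuous_indiscrete (f := p)) (fun _ _ => conj I I)
    (fun _ _ _ _ => I) (fun _ _ _ _ _ => I).

Lemma is_hom_indiscrete (X : mds R) (h : X -> indiscrete_mds) : is_hom h.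
Proof. by split => //; exact: continuous_indiscrete. Qed.

Lemma glob_map_indiscrete n (Z : set 'rV[R]_n) (c d : indiscrete_mds)
    (k : 'rV[R]_n * R -> indiscrete_mds) :
  (forall z, Z z -> k (z, 0) = c /\ k (z, 1) = d) -> glob_map Z c d k.
Proof.
by move=> kends; split => //; exact: (continuous_indiscrete (f := (k : subspace _ -> _))).
Qed.

End Indiscrete.

Definition cell_interior (R : realType) n (z : 'rV[R]_n) (t : R) : Prop :=
  [/\ @Disk R n z, ~ @Sphere R n z & 0 < t < 1].

Record cell_data (R : realType) (X X' : mds R) := CellData {
  cell_dim : nat;
  cell_a : X; cell_b : X; cell_g : 'rV[R]_cell_dim * R -> X;
  cell_a' : X'; cell_b' : X'; cell_g' : 'rV[R]_cell_dim * R -> X' }.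
Arguments cell_g {R X X'} c.
Arguments cell_g' {R X X'} c.

Section CellPushout.
Variables (R : realType) (X X' : mds R) (f : X -> X') (c : cell_data X X').
Local Notation n := (cell_dim c).
Local Notation a := (cell_a c).
Local Notation b := (cell_b c).
Local Notation g := (cell_g c).
Local Notation a' := (cell_a' c).
Local Notation b' := (cell_b' c).
Local Notation g' := (cell_g' c).

Definition is_cell_pushout : Prop :=
  [/\ glob_map (@Sphere R n) a b g,
      glob_map (@Disk R n) a' b' g',
      a' = f a /\ b' = f b,
      (forall z t, @Sphere R n z -> I01set t -> g' (z, t) = f (g (z, t))) &
      forall (Y : mds R) (h : X -> Y) (ya yb : Y) (k : 'rV[R]_n * R -> Y),
        is_hom h -> glob_map (@Disk R n) ya yb k -> ya = h a -> yb = h b ->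
        (forall z t, @Sphere R n z -> I01set t -> k (z, t) = h (g (z, t))) ->
        let P (u : X' -> Y) :=
          [/\ is_hom u, (forall x, u (f x) = h x), u a' = ya, u b' = yb &
              (forall z t, @Disk R n z -> I01set t -> u (g' (z, t)) = k (z, t))]
        in exists u, P u /\ forall v, P v -> v = u].

Hypothesis fc : is_cell_pushout.

Lemma cell_pushout_lift (T : choiceType) (h : X -> T) (k : 'rV[R]_n * R -> T) :
  (forall z, @Disk R n z -> k (z, 0) = h a /\ k (z, 1) = h b) ->
  (forall z t, @Sphere R n z -> I01set t -> k (z, t) = h (g (z, t))) ->
  exists u : X' -> T, (forall x, u (f x) = h x) /\
    forall z t, @Disk R n z -> I01set t -> u (g' (z, t)) = k (z, t).
Proof.
move=> kends ksphere; case: fc => _ _ _ _ /(_ (@indiscrete_mds R T) h (h a) (h b) k).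
case/(_ (is_hom_indiscrete (T := T) h) (glob_map_indiscrete (T := T) kends) erefl erefl ksphere).
by move=> u [[_ uf _ _ ug'] _]; exists u.
Qed.

Lemma cell_pushout_inj : injective f.
Proof.
case: (fc) => [[_ _ _ gends _] _ _ _ _].
pose k (zt : 'rV[R]_n * R) : X :=
  if zt.2 == 0 then a else if zt.2 == 1 then b
  else if pselect (@Sphere R n zt.1) then g zt else a.
have [|z t zS _|u [uf _]] := @cell_pushout_lift X id k.
- by move=> z _; rewrite /k /= eqxx oner_eq0 eqxx.
- have [ga gb] := gends z zS; rewrite /k /=.
  case: eqP => [->//|_]; case: eqP => [->//|_].
  by case: pselect.
- exact: can_inj uf.
Qed.

(* Any value outside ]0, 1[ would do for the points of X. *)
Lemma cell_time : exists tau : X' -> R, (forall x, tau (f x) = 2) /\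
  forall z t, cell_interior z t -> tau (g' (z, t)) = t.
Proof.
pose k (zt : 'rV[R]_n * R) : R := if pselect (cell_interior zt.1 zt.2) then zt.2 else 2.
have [|z t zS _|tau [tauf taug']] := @cell_pushout_lift R (fun=> 2) k.
- move=> z _; rewrite /k /=; split.
  + by case: pselect => [/= [_ _ /andP[]]|//]; rewrite ltxx.
  + by case: pselect => [/= [_ _ /andP[_]]|//]; rewrite ltxx.
- by rewrite /k /=; case: pselect => [/= [_ /(_ zS)]|].
- exists tau; split => // z t zt; rewrite taug'.
  + by rewrite /k /=; case: (pselect (cell_interior z t)).
  + by case: zt.
  + by case: zt => _ _ /andP[? ?]; rewrite /I01set /= in_itv /=; apply/andP; split; apply: ltW.
Qed.

Lemma cell_interior_not_image z t x : cell_interior z t -> g' (z, t) <> f x.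
Proof.
move=> zt gx; have [tau [tauf taug']] := cell_time.
have := taug' _ _ zt; rewrite gx tauf => t2.
by case: zt => _ _; rewrite -t2 => /andP[_]; lra.
Qed.

Lemma cell_time_inj z1 t1 z2 t2 : cell_interior z1 t1 -> cell_interior z2 t2 ->
  g' (z1, t1) = g' (z2, t2) -> t1 = t2.
Proof.
move=> zt1 zt2 e; have [tau [_ taug']] := cell_time.
by rewrite -(taug' _ _ zt1) -(taug' _ _ zt2) e.
Qed.

End CellPushout.

Lemma cell_pushoutP (R : realType) (X X' : mds R) (f : X -> X') :
  cell_pushout f -> exists c, is_cell_pushout f c.
Proof. by move=> [n [a [b [g [a' [b' [g' fc]]]]]]]; exists (CellData a b g a' b' g'). Qed.

Section CellularComplex.
Variables (R : realType) (O : Type) (lt : O -> O -> Prop) (lam : O)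
  (X : O -> mds R) (F : forall m n, X m -> X n).
Arguments F : clear implicits.
Hypothesis cellX : cellular lt lam X F.

Local Notation ole := (ole lt).

Let lt_wf : well_founded lt.
Proof. by case: cellX => [[[wf _ _] _] _ _ _ _]. Qed.

Let lt_trans m n r : lt m n -> lt n r -> lt m r.
Proof. by case: cellX => [[[_ tr _] _] _ _ _ _]; exact: tr. Qed.

Let lt_total m n : [\/ lt m n, m = n | lt n m].
Proof. by case: cellX => [[[_ _ tot] _] _ _ _ _]. Qed.

Let F_id n (x : X n) : F n n x = x.
Proof. by case: cellX => _ [Fid _ _] _ _ _. Qed.

Let F_comp m n r : ole m n -> ole n r -> forall x, F n r (F m n x) = F m r x.
Proof. by case: cellX => _ [_ Fcomp _] _ _ _; exact: Fcomp. Qed.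

Let F_hom m n : ole m n -> is_hom (F m n).
Proof. by case: cellX => _ [_ _ Fhom] _ _ _; exact: Fhom. Qed.

Let stage_zero n : is_zero lt n -> mP (X n) = set0.
Proof. by move=> nz; case: cellX => _ _ /(_ n nz) []. Qed.

Let stage_succ m n : is_succ lt m n -> cell_pushout (F m n).
Proof. by case: cellX => _ _ _ succ _; exact: succ. Qed.

Lemma lt_irrefl n : ~ lt n n.
Proof. by elim/(well_founded_ind lt_wf): n => k IH kk; exact: (IH k kk kk). Qed.

Lemma ole_refl n : ole n n. Proof. by left. Qed.

Lemma lt_ole m n : lt m n -> ole m n. Proof. by right. Qed.

Lemma ole_trans m n r : ole m n -> ole n r -> ole m r.
Proof. by case=> [->//|mn] [<-|nr]; right => //; exact: lt_trans mn nr. Qed.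

Lemma ole_max m n : exists w, [/\ ole m w, ole n w & w = m \/ w = n].
Proof.
have [mn|<-|nm] := lt_total m n.
- by exists n; split; [exact: lt_ole | exact: ole_refl | right].
- by exists m; split; [exact: ole_refl | exact: ole_refl | left].
- by exists m; split; [exact: ole_refl | exact: lt_ole | left].
Qed.

Lemma zero_ole z n : is_zero lt z -> ole z n.
Proof. by move=> z0; have [zn|<-|/z0//] := lt_total z n; [right | left]. Qed.

Lemma succ_ole_pred m n r : is_succ lt m n -> lt r n -> ole r m.
Proof.
move=> [mn between] rn; have [rm|<-|mr] := lt_total r m; [by right | by left |].
by case: (between r).
Qed.

Lemma succ_unique m1 m2 n : is_succ lt m1 n -> is_succ lt m2 n -> m1 = m2.
Proof.
move=> m1n m2n; case: (succ_ole_pred m1n m2n.1) => // m21.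
case: (succ_ole_pred m2n m1n.1) => // m12.
by case: (lt_irrefl (lt_trans m12 m21)).
Qed.

Lemma ordinal_cases n : [\/ is_zero lt n, exists m, is_succ lt m n | is_limit lt n].
Proof.
have [nz|nz] := pselect (is_zero lt n); first exact: Or31.
by have [ns|ns] := pselect (exists m, is_succ lt m n); [apply: Or32 | apply: Or33].
Qed.

Lemma limit_lift n (T : choiceType) (h : forall m, X m -> T) : is_limit lt n ->
  (forall m r, ole m r -> lt r n -> forall x, h r (F m r x) = h m x) ->
  exists u : X n -> T, forall m, lt m n -> forall x, u (F m n x) = h m x.
Proof.
move=> nlim hF; case: cellX => _ _ _ _ /(_ n nlim (@indiscrete_mds R T) h).
case/(_ (fun m _ => is_hom_indiscrete (T := T) (h m)) hF) => u [[_ uF] _].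
by exists u.
Qed.

Lemma limit_F_inj m n : is_limit lt n -> lt m n ->
  (forall q, lt q n -> ole m q -> injective (F m q)) -> injective (F m n).
Proof.
move=> nlim mn IH x1 x2 Fx.
(* The class of x1 in the colimit of the underlying sets. *)
pose meets r (y : X r) := exists q, [/\ lt q n, ole r q, ole m q & F r q y = F m q x1].
have meetsF q r y : ole q r -> lt r n -> meets r (F q r y) <-> meets q y.
  move=> qr rn; split=> [[w [wn rw mw e]]|[q' [q'n qq' mq' e]]].
    by exists w; split => //; [exact: ole_trans qr rw | rewrite -e F_comp].
  have [w [rw q'w wrq']] := ole_max r q'.
  have wn : lt w n by case: wrq' => ->.
  exists w; split => //; first exact: ole_trans mq' q'w.
  by rewrite F_comp // -(F_comp qq' q'w) e F_comp.
have [u uF] := limit_lift (h := fun r y => `[< meets r y >]) nlim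
  (fun q r qr rn y => asbool_equiv_eq (meetsF q r y qr rn)).
have : meets m x2.
  apply/asboolP; rewrite -uF // -Fx uF //; apply/asboolP.
  by exists m; split => //; exact: ole_refl.
by case=> q [qn _ mq /(IH q qn mq)].
Qed.

Lemma F_inj m n : ole m n -> injective (F m n).
Proof.
elim/(well_founded_ind lt_wf): n m => n IH m [<-|mn].
  by move=> x y; rewrite !F_id.
have [nz|[p pn]|nlim] := ordinal_cases n.
- by case: (nz m).
- have mp := succ_ole_pred pn mn; have [c pc] := cell_pushoutP (stage_succ pn).
  move=> x1 x2; rewrite -!(F_comp mp (lt_ole pn.1)) => /(cell_pushout_inj pc).
  exact: (IH _ pn.1 _ mp).
- by apply: limit_F_inj => // q qn mq; exact: IH.
Qed.

Definition base n : set (X n) :=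
  [set y | exists z (x : X z), is_zero lt z /\ y = F z n x].
Arguments base : clear implicits.

Lemma base_F m n y : ole m n -> base n (F m n y) <-> base m y.
Proof.
move=> mn; split=> [[z [x [z0 e]]]|[z [x [z0 ->]]]]; exists z, x; split => //.
- by apply: (F_inj mn); rewrite e F_comp //; exact: zero_ole.
- by rewrite F_comp //; exact: zero_ole.
Qed.

(* The attaching data of each cell is fixed once and for all: the time
   coordinate of a cell depends on its presentation. *)
Definition cell_of m s : option (cell_data (X m) (X s)) :=
  if pselect (exists c, is_cell_pushout (F m s) c) is left ex
  then Some (proj1_sig (cid ex)) else None.
Arguments cell_of : clear implicits.

Lemma cell_ofP m s c : cell_of m s = Some c -> is_cell_pushout (F m s) c.
Proof.
by rewrite /cell_of; case: pselect => // ex [<-]; exact: proj2_sig (cid ex).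
Qed.

Lemma cell_of_succ m s : is_succ lt m s -> exists c, cell_of m s = Some c.
Proof.
move=> /stage_succ/cell_pushoutP ex; rewrite /cell_of.
by destruct pselect as [ex'|nex]; [eexists | case: nex].
Qed.

Definition cell_part (J : set R) n : set (X n) :=
  [set y | exists m s (c : cell_data (X m) (X s)) (z : 'rV_(cell_dim c)) t,
     [/\ is_succ lt m s /\ ole s n, cell_of m s = Some c, cell_interior z t, J t
       & y = F s n (cell_g' c (z, t))]].
Arguments cell_part : clear implicits.

Definition late n := cell_part (fun t => 1/2 < t) n.
Definition early n := cell_part (fun t => t < 1/2) n.
Arguments late : clear implicits.
Arguments early : clear implicits.

Lemma cell_part_F J m n y : ole m n -> cell_part J m y -> cell_part J n (F m n y).
Proof.
move=> mn [p [s [c [z [t [[ps sm] pc zt Jt ->]]]]]].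
exists p, s, c, z, t; split => //; last by rewrite F_comp.
by split => //; exact: ole_trans sm mn.
Qed.

Lemma cell_interior_fresh p s (c : cell_data (X p) (X s)) n z t r (w : X r) :
  is_succ lt p s -> cell_of p s = Some c -> cell_interior z t -> lt r s -> ole s n ->
  F s n (cell_g' c (z, t)) <> F r n w.
Proof.
move=> ps pc zt rs sn; have rp := succ_ole_pred ps rs; have ps' := lt_ole ps.1.
rewrite -(F_comp (ole_trans rp ps') sn) -(F_comp rp ps') => /(F_inj sn).
exact: (cell_interior_not_image (cell_ofP pc) zt).
Qed.

Lemma cell_part_disjoint J1 J2 n y : (forall t, J1 t -> J2 t -> False) ->
  cell_part J1 n y -> cell_part J2 n y -> False.
Proof.
move=> J12 [m1 [s1 [c1 [z1 [t1 [[ms1 s1n] mc1 zt1 Jt1 ->]]]]]].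
move=> [m2 [s2 [c2 [z2 [t2 [[ms2 s2n] mc2 zt2 Jt2 e]]]]]].
have [s12|es|s21] := lt_total s1 s2.
- exact: cell_interior_fresh ms2 mc2 zt2 s12 s2n (esym e).
- subst s2; have em := succ_unique ms1 ms2; subst m2.
  move: mc2; rewrite mc1 => -[ec]; subst c2.
  move/(F_inj s1n)/(cell_time_inj (cell_ofP mc1) zt1 zt2): e => et; subst t2.
  exact: J12 Jt1 Jt2.
- exact: cell_interior_fresh ms1 mc1 zt1 s21 s1n e.
Qed.

Lemma late_early_disjoint n y : late n y -> early n y -> False.
Proof. by apply: cell_part_disjoint => t; lra. Qed.

Lemma tame_path_F m n (p : I01 R -> X m) : ole m n ->
  tame_path (base m) (late m) (early m) p ->
  tame_path (base n) (late n) (early n) (F m n \o p).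
Proof.
move=> mn; apply: tame_path_map => [|y|y|y].
- exact: F_inj.
- exact: (iff_sym (base_F y mn)).
- exact: cell_part_F.
- exact: cell_part_F.
Qed.

Lemma cell_traversal_tame m s (c : cell_data (X m) (X s)) (z : 'rV_(cell_dim c)) :
  is_succ lt m s -> cell_of m s = Some c ->
  base s (cell_a' c) -> base s (cell_b' c) -> Disk z -> ~ Sphere z ->
  tame_path (base s) (late s) (early s) (fun t => cell_g' c (z, v t)).
Proof.
move=> ms mc Ba Bb zD zS; have fc := cell_ofP mc.
case: (fc) => _ [_ _ _ g'ends _] _ _ _; have [g'0 g'1] := g'ends z zD.
have zI t : 0 < v t < 1 -> cell_interior z (v t) by [].
have in_part J t : 0 < v t < 1 -> J (v t) -> cell_part J s (cell_g' c (z, v t)).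
  move=> tI Jt; exists m, s, c, z, (v t).
  split; [by split => //; exact: ole_refl | by [] | exact: zI | by [] | by rewrite F_id].
apply: tame_path_traversal.
- by rewrite val_i0 g'0.
- by rewrite val_i1 g'1.
- move=> t /(zI t) tI [z0 [x [z00 e]]].
  have z0s : lt z0 s.
    by case: (zero_ole s z00) => // ez; move: z00; rewrite ez => /(_ m ms.1).
  move: e; rewrite -(F_id (cell_g' c (z, v t))).
  exact: (cell_interior_fresh ms mc tI z0s (ole_refl s)).
- by move=> x y /(zI x) xI /(zI y) yI /(cell_time_inj fc xI yI)/val01_inj.
- by move=> t /andP[t0 t1]; apply: in_part => //; apply/andP; split; lra.
- by move=> t /andP[t0 t1]; apply: in_part => //; apply/andP; split; lra.
Qed.

Definition tame_stage n : Prop := (forall y, mst (X n) y -> base n y) /\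
  forall p, mP (X n) p -> tame_path (base n) (late n) (early n) p.

Definition tame_part n : mds R := tame_mds (base n) (@late_early_disjoint n).

Lemma is_hom_F_tame m n : ole m n -> tame_stage m -> is_hom (F m n : X m -> tame_part n).
Proof.
move=> mn [mB mtame]; apply/is_hom_tameP; split; first exact: F_hom.
- by move=> x /mB; rewrite base_F.
- by move=> p /mtame; exact: tame_path_F.
Qed.

Lemma tame_stage_of_hom n (u : X n -> tame_part n) :
  is_hom u -> (forall x, u x = x) -> tame_stage n.
Proof.
move=> /is_hom_tameP[_ uB utame] ux; split=> [y /uB|p /utame]; first by rewrite ux.
by have -> : u \o p = p by apply: funext => t; rewrite /= ux.
Qed.

Lemma tame_zero n : is_zero lt n -> tame_stage n.
Proof.
move=> nz; split=> [y _|p]; last by rewrite stage_zero.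
by exists n, y; split => //; rewrite F_id.
Qed.

Lemma tame_succ m n : is_succ lt m n -> tame_stage m -> tame_stage n.
Proof.
move=> mn mtame; have mn' := lt_ole mn.1.
have [c nc] := cell_of_succ mn; have fc := cell_ofP nc.
case: (fc) => [[aS bS _ _ gP] g'glob [ea eb] g'g UP].
have Ba : base n (cell_a' c) by rewrite ea base_F //; exact: mtame.1.
have Bb : base n (cell_b' c) by rewrite eb base_F //; exact: mtame.1.
have g'tame : glob_map (@Disk R _) (cell_a' c : tame_part n) (cell_b' c) (cell_g' c).
  case: g'glob => a'S b'S g'cont g'ends g'P; split => // z phi zD phiG.
  split; first exact: g'P.
  have [zS|zS] := pselect (Sphere z).
  - have -> : (fun t => cell_g' c (z, v (phi t))) =
              F m n \o (fun t => cell_g c (z, v (phi t))).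
      by apply: funext => t; rewrite /= g'g //; exact: set_valP.
    by apply: tame_path_F => //; apply: mtame.2; exact: gP.
  - exact: (tame_path_G11 phiG (cell_traversal_tame mn nc Ba Bb zD zS)).
have [u [[uhom uF ua ub ug'] _]] :=
  UP (tame_part n) (F m n) _ _ _ (is_hom_F_tame mn' mtame) g'tame ea eb g'g.
have [u0 [_ u0uniq]] := UP (X n) (F m n) _ _ _ (F_hom mn') g'glob ea eb g'g.
have /is_hom_tameP[uhomX _ _] := uhom.
have idu0 : (fun x => x) = u0 by apply: u0uniq; split => //; exact: is_hom_id.
have uu0 : (u : X n -> X n) = u0 by apply: u0uniq.
by apply: (tame_stage_of_hom uhom) => x; rewrite uu0 -idu0.
Qed.

Lemma tame_limit n : is_limit lt n -> (forall m, lt m n -> tame_stage m) ->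
  tame_stage n.
Proof.
move=> nlim IH.
have Fcomp m r : ole m r -> lt r n -> forall x, F r n (F m r x) = F m n x.
  by move=> mr rn x; rewrite F_comp //; exact: lt_ole.
case: cellX => _ _ _ _ /(_ n nlim) UP.
have [u [[uhom uF] _]] := UP (tame_part n) (fun r => F r n)
  (fun r rn => is_hom_F_tame (lt_ole rn) (IH r rn)) Fcomp.
have [u0 [_ u0uniq]] := UP (X n) (fun r => F r n)
  (fun r rn => F_hom (lt_ole rn)) Fcomp.
have /is_hom_tameP[uhomX _ _] := uhom.
have idu0 : (fun x => x) = u0 by apply: u0uniq; split => //; exact: is_hom_id.
have uu0 : (u : X n -> X n) = u0 by apply: u0uniq.
by apply: (tame_stage_of_hom uhom) => x; rewrite uu0 -idu0.
Qed.

Theorem tame_stages n : tame_stage n.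
Proof.
elim/(well_founded_ind lt_wf): n => n IH.
have [nz|[m mn]|nlim] := ordinal_cases n.
- exact: tame_zero.
- exact: tame_succ mn (IH m mn.1).
- exact: tame_limit.
Qed.

End CellularComplex.

Theorem proposition5p13 (R : realType) (O : Type) (lt : O -> O -> Prop)
    (lam : O) (X : O -> mds R) (F : forall m n, X m -> X n) :
  cellular lt lam X F ->
  forall g, mP (X lam) g -> locally_injective g.
Proof.
move=> cellX g gP.
by have [_ /(_ g gP)[]] := tame_stages cellX lam.
Qed.
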